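(* Let $\Gamma$ be a finite abelian group of order $n=\prod_p p^{v_p}$, and suppose that for each prime $p\mid n$, either $v_p<p-1$, or $p\le 3$ and $v_p<p$. Then every abelian Hopf-Galois structure on a Galois field extension $L/K$ with $\mathrm{Gal}(L/K)\cong\Gamma$ has type $\Gamma$; equivalently, $e_{\mathrm{ab}}(\Gamma)=e(\Gamma,\Gamma)$.
   Context: For finite groups $\Gamma,G$ of the same order, $e(\Gamma,G)$ is the number of Hopf-Galois structures of type $G$ on a Galois field extension with Galois group $\Gamma$; equivalently, the number of $\mathrm{Aut}(G)$-conjugacy classes of injective homomorphisms $\beta:\Gamma\to\mathrm{Hol}(G)$ whose image acts regularly on $G$, where $\mathrm{Hol}(G)=\rho(G)\cdot\mathrm{Aut}(G)\subseteq\mathrm{Perm}(G)$ and $\rho(g)(x)=xg^{-1}$. A Hopf-Galois structure is abelian if its type $G$ is abelian, and $e_{\mathrm{ab}}(\Gamma)=\sum_{G\text{ abelian}} e(\Gamma,G)$ over isomorphism classes of abelian groups $G$ of order $|\Gamma|$. *)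

From mathcomp Require Import all_boot all_fingroup.
Set Implicit Arguments. Unset Strict Implicit. Unset Printing Implicit Defensive.
Local Open Scope group_scope.

Section Holomorph.
Variable gT : finGroupType.

Definition rho_fun (g : gT) : gT -> gT := fun x => x * g^-1.
Lemma rho_inj (g : gT) : injective (rho_fun g).
Proof. by move=> x y; apply: mulIg. Qed.
Definition rho (g : gT) : {perm gT} := perm (@rho_inj g).

Definition Hol : {set {perm gT}} := (rho @: [set: gT]) * Aut [set: gT].
End Holomorph.

Section Count.
Variables (aT gT : finGroupType) (Gamma : {set aT}).

(* A finite function f : aT -> Perm(G) encodes a map Gamma -> Perm(G)
   (normalised to 1 outside Gamma). *)
Definition regular_emb (f : {ffun aT -> {perm gT}}) : bool :=
  [&& [forall x in Gamma, forall y in Gamma, f (x * y) == f x * f y],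
      [forall x in Gamma, forall y in Gamma, (f x == f y) ==> (x == y)],
      [forall x in Gamma, f x \in Hol gT],
      [forall x : gT, forall y : gT, #|[set g in Gamma | f g x == y]| == 1%N]
    & [forall x in ~: Gamma, f x == 1]].

Definition regular_embs : {set {ffun aT -> {perm gT}}} := [set f | regular_emb f].

Definition aut_conj (f f' : {ffun aT -> {perm gT}}) : bool :=
  [exists a in Aut [set: gT], forall g in Gamma, f' g == f g ^ a].

Definition e_HGS : nat :=
  #|[set [set f' in regular_embs | aut_conj f f'] | f in regular_embs]|.
End Count.

From mathcomp Require Import all_boot all_fingroup all_solvable.
From mathcomp Require Import zify.
Set Implicit Arguments. Unset Strict Implicit. Unset Printing Implicit Defensive.
Local Open Scope group_scope.

(* A regular embedding f : Gamma -> Hol(G) splits as f g x = sigma_g(x) * tau(g), with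
   sigma_g in Aut(G) and tau : Gamma -> G a bijection satisfying the cocycle rule
   tau(g h) = sigma_h(tau g) * tau h.  Abelian groups related by an order-preserving
   bijection have Omega-series of equal orders, hence are isomorphic, so it suffices
   to show #[tau g] = #[g].
   Commutativity of Gamma makes Gamma / {g | tau(g)_q = 1} a q-group, so a q'-element d
   has tau(d)_q = 1 and sigma_d fixes the q-elements; this reduces the claim to a
   p-element g, with tau g in the Sylow p-subgroup P of G.  On P the map
   delta x = sigma_g(x) x^-1 is an endomorphism whose image strictly shrinks until it
   is trivial (sigma_g has p-power order, so it fixes a nontrivial point of each image),
   and |P| <= p^(p-1) forces delta^(p-1) = 1.  The cocycle rule then gives
   tau(g^k) = prod_(j < p-1) delta^j(tau g)^C(k, j+1); as p^e divides C(p^e, j) for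
   0 < j < p and (p-1)! is prime to p, tau(g^(p^e)) = 1 iff (tau g)^(p^e) = 1.
   Only v_p(|Gamma|) < p is used.
*)

Lemma coprime_fact_pred p : prime p -> coprime p (p.-1)`!.
Proof.
move=> p_pr; rewrite prime_coprime //; apply: contraTN (p_pr) => p_dvd_fact.
by rewrite (Wilson (prime_gt1 p_pr)) -addn1 dvdn_addr // gtnNdvd ?prime_gt1.
Qed.

Lemma dvdn_prime_pow_bin p e j : prime p -> (0 < j < p)%N -> (p ^ e %| 'C(p ^ e, j))%N.
Proof.
move=> p_pr /andP[j_gt0 lt_j_p]; rewrite -(prednK j_gt0) in lt_j_p *.
rewrite -(@Gauss_dvdr _ j.-1.+1) -?mul_bin_diag ?dvdn_mulr //.
by rewrite coprimeXl // prime_coprime // gtnNdvd.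
Qed.

Lemma sorted_geq_nth_gt (s : seq nat) n i :
  sorted geq s -> (n < nth 0 s i)%N = (i < count [pred m | n < m] s)%N.
Proof.
elim: s i => [|x s IHs] i /=; first by rewrite nth_nil ltn0.
move=> xs; have [ltnx | lexn] := ltnP n x.
  by case: i => [|i] //=; rewrite add1n ltnS IHs ?(path_sorted xs).
have s_le_n m : m \in s -> (m <= n)%N.
  by move=> /(allP (order_path_min (rev_trans leq_trans) xs)) /leq_trans; apply.
have -> : count [pred m | n < m] s = 0%N.
  by apply/eqP; rewrite eqn0Ngt -has_count; apply/hasPn => m /s_le_n; rewrite -leqNgt.
case: i => [|i] /=; first by rewrite ltnNge lexn.
have [/(mem_nth 0)/s_le_n | /(nth_default 0)->] := ltnP i (size s); last by [].
by rewrite ltnNge => ->.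
Qed.

Lemma sorted_geq_eq_count (s t : seq nat) :
    sorted geq s -> sorted geq t -> size s = size t ->
    (forall n, count [pred m | n < m] s = count [pred m | n < m] t) ->
  s = t.
Proof.
move=> s_sorted t_sorted eq_size eq_count.
apply: (eq_from_nth (x0 := 0)) => // i _; apply/eqP.
have gt_nth n : (n < nth 0 s i)%N = (n < nth 0 t i)%N.
  by rewrite !sorted_geq_nth_gt ?eq_count.
by rewrite eqn_leq; apply/andP; split; rewrite leqNgt;
  [rewrite gt_nth | rewrite -gt_nth]; rewrite ltnn.
Qed.

Lemma sorted_logn_abelian_type p (gT : finGroupType) (A : {set gT}) :
  sorted geq (map (logn p) (abelian_type A)).
Proof.
rewrite sorted_map; apply: sub_in_sorted (abelian_type_gt1 A) (abelian_type_dvdn_sorted A).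
by move=> m n /ltnW m_gt0 _ /= /(dvdn_leq_log p m_gt0).
Qed.

Lemma count_logn_abelian_type p n (gT : finGroupType) (G : {group gT}) :
    abelian G ->
  count [pred m | n < logn p m] (abelian_type G)
    = logn p #|'Ohm_n.+1(G) : 'Ohm_n(G)|.
Proof.
by case/abelian_structure=> b defG <-; rewrite count_map -(count_logn_dprod_cycle _ _ defG).
Qed.

Lemma nth_abelian_type_gt0 (gT : finGroupType) (A : {set gT}) i :
  (i < size (abelian_type A))%N -> (0 < nth 1 (abelian_type A) i)%N.
Proof. by move=> ltiA; apply/ltnW/(allP (abelian_type_gt1 A)); rewrite mem_nth. Qed.

Lemma isog_abelian_card_Ohm (gT rT : finGroupType) (G : {group gT}) (H : {group rT}) :
    abelian G -> abelian H -> #|G| = #|H| ->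
    (forall n, #|'Ohm_n(G)| = #|'Ohm_n(H)|) ->
  G \isog H.
Proof.
move=> cGG cHH eq_card eq_Ohm; rewrite eq_abelian_type_isog //; apply/eqP.
have eq_size : size (abelian_type G) = size (abelian_type H).
  rewrite !size_abelian_type // /rank eq_card; apply: eq_bigr => p _.
  by rewrite !p_rank_abelian // eq_Ohm.
have eq_logn p : map (logn p) (abelian_type G) = map (logn p) (abelian_type H).
  apply: sorted_geq_eq_count; rewrite ?sorted_logn_abelian_type ?size_map // => n.
  rewrite !count_map !(count_logn_abelian_type p n) // -!divgS ?Ohm_leq //.
  by rewrite !eq_Ohm.
apply: (eq_from_nth (x0 := 1%N)) => // i ltiG.
have ltiH : (i < size (abelian_type H))%N by rewrite -eq_size.
apply: eqn_from_log => [||p]; rewrite ?nth_abelian_type_gt0 //.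
by rewrite -!(nth_map 1%N 0%N (logn p)) ?eq_logn.
Qed.

Definition prime_pow_prod n k := (\prod_(p < k.+1 | prime p) p ^ n)%N.

Lemma prime_pow_prod_factor n k p : prime p -> (p <= k)%N ->
  exists2 m, prime_pow_prod n k = (p ^ n * m)%N & coprime p m.
Proof.
move=> p_pr le_p_k; rewrite /prime_pow_prod (bigD1 (Ordinal (le_p_k : p < k.+1)%N)) //=.
eexists; first by [].
rewrite prime_coprime // Euclid_dvd_prod // big1 // => q /andP[q_pr neq_qp].
rewrite Euclid_dvdX // dvdn_prime2 //; apply: contraNF neq_qp => /andP[/eqP eq_pq _].
by rewrite -val_eqE /= eq_pq.
Qed.

Lemma logn_prime_pow_prod n k p : prime p -> (p <= k)%N ->
  logn p (prime_pow_prod n k) = n.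
Proof.
move=> p_pr le_p_k; have [m -> co_pm] := prime_pow_prod_factor n p_pr le_p_k.
have m_gt0 : (0 < m)%N.
  by case: m co_pm => // /eqP; rewrite gcdn0 => p1; rewrite p1 in p_pr.
by rewrite lognM ?expn_gt0 ?m_gt0 ?prime_gt0 // pfactorK // logn_coprime ?addn0.
Qed.

Lemma Ohm_abelian_Ldiv (gT : finGroupType) (A : {group gT}) n : abelian A ->
  'Ohm_n(A) = 'Ldiv_(prime_pow_prod n #|A|)(A).
Proof.
move=> cAA; set M := prime_pow_prod n #|A|.
have M_gt0 : (0 < M)%N by apply: prodn_cond_gt0 => p p_pr; rewrite expn_gt0 prime_gt0.
have le_pdiv_order x : x \in A -> (pdiv #[x] <= #|A|)%N.
  move=> Ax; apply: leq_trans (pdiv_leq (order_gt0 x)) _.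
  exact: dvdn_leq (cardG_gt0 A) (order_dvdG Ax).
apply/eqP; rewrite eqEsubset; apply/andP; split.
  rewrite -(gen_set_id (group_Ldiv M cAA)) genS //.
  apply/subsetP=> x /setIdP[Ax /eqP xn1]; apply/LdivP; split=> //.
  have [-> | ntx] := eqVneq x 1; first by rewrite expg1n.
  have pdiv_pr : prime (pdiv #[x]) by rewrite pdiv_prime ?order_gt1.
  have [m defM _] := prime_pow_prod_factor n pdiv_pr (le_pdiv_order x Ax).
  by rewrite /M defM expgM xn1 expg1n.
apply/subsetP=> x /LdivP[Ax xM1]; rewrite -(prod_constt x); apply: group_prod => p _.
have [p_pr | /negPf p_npr] := boolP (prime p); last first.
  suff -> : x.`_p = 1 by rewrite group1.
  apply/constt1P/pnatP=> // q q_pr _; rewrite !inE.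
  by apply: contraTneq q_pr => ->; rewrite p_npr.
apply: mem_gen; rewrite inE groupX //=; apply/OhmPredP; exists p => //.
apply/eqP; rewrite -order_dvdn order_constt p_part.
have [le_p_x | lt_x_p] := leqP p #[x]; last first.
  by rewrite logn_coprime ?dvd1n // prime_coprime // gtnNdvd ?order_gt0.
have le_p_A : (p <= #|A|)%N := leq_trans le_p_x (dvdn_leq (cardG_gt0 A) (order_dvdG Ax)).
rewrite dvdn_exp2l ?prime_gt1 // -{1}(logn_prime_pow_prod n p_pr le_p_A).
by apply: dvdn_leq_log => //; rewrite order_dvdn xM1.
Qed.

Lemma isog_abelian_order_bij (gT rT : finGroupType) (G : {group gT}) (H : {group rT})
    (t : gT -> rT) :
    abelian G -> abelian H -> {in G &, injective t} -> t @: G = H ->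
    {in G, forall x, #[t x] = #[x]} ->
  G \isog H.
Proof.
move=> cGG cHH t_inj tG t_order.
have eq_card : #|G| = #|H| by rewrite -tG card_in_imset.
apply: isog_abelian_card_Ohm => // n; rewrite !Ohm_abelian_Ldiv // -eq_card.
set M := prime_pow_prod n #|G|.
have -> : 'Ldiv_M(H) = t @: 'Ldiv_M(G).
  apply/setP=> y; apply/idP/imsetP => [/LdivP[] | [x /LdivP[Gx xM1] ->]].
    rewrite -tG => /imsetP[x Gx ->] txM1; exists x => //; apply/LdivP; split=> //.
    by apply/eqP; rewrite -order_dvdn -t_order // order_dvdn txM1.
  apply/LdivP; split; first by rewrite -tG imset_f.
  by apply/eqP; rewrite -order_dvdn t_order // order_dvdn xM1.
by rewrite card_in_imset //; apply: sub_in2 t_inj => x /setIP[].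
Qed.

Section RegularEmbedding.

Variables (aT gT : finGroupType) (Gamma : {group aT}) (f : {ffun aT -> {perm gT}}).
Hypothesis f_reg : regular_emb Gamma f.

(* emb_tr and emb_aut are the tau and sigma of the overview above. *)
Definition emb_tr g := f g 1.
Fact emb_aut_key : unit. Proof. by []. Qed.
Definition emb_aut_def g x := f g x * (emb_tr g)^-1.
Definition emb_aut := locked_with emb_aut_key emb_aut_def.

Lemma emb_autE g x : emb_aut g x = f g x * (emb_tr g)^-1.
Proof. by rewrite /emb_aut unlock. Qed.

Lemma embE g x : f g x = emb_aut g x * emb_tr g.
Proof. by rewrite emb_autE mulgKV. Qed.

Lemma emb_morph g h : g \in Gamma -> h \in Gamma -> f (g * h) = f g * f h.
Proof.
by move=> Gg Gh; case/and5P: f_reg => /forall_inP/(_ g Gg)/forall_inP/(_ h Gh)/eqP.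
Qed.

Lemma emb_Hol g : g \in Gamma -> f g \in Hol gT.
Proof. by move=> Gg; case/and5P: f_reg => _ _ /forall_inP/(_ g Gg). Qed.

Lemma emb_regular x y : #|[set g in Gamma | f g x == y]| = 1%N.
Proof. by case/and5P: f_reg => _ _ _ /forallP/(_ x)/forallP/(_ y)/eqP. Qed.

Lemma emb_aut_Aut g : g \in Gamma ->
  exists2 a, a \in Aut [set: gT] & emb_aut g =1 a.
Proof.
move=> /emb_Hol/mulsgP[_ a /imsetP[z _ ->] Aut_a def_fg]; exists a => // x.
have aM := morphicP (Aut_morphic Aut_a).
by rewrite emb_autE /emb_tr def_fg !permM !permE /rho_fun mul1g aM ?inE // mulgK.
Qed.

Lemma emb_autM g x y : g \in Gamma -> emb_aut g (x * y) = emb_aut g x * emb_aut g y.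
Proof.
by move=> /emb_aut_Aut[a Aut_a aE]; rewrite !aE; apply: (morphicP (Aut_morphic Aut_a)).
Qed.

Lemma emb_aut_inj g : injective (emb_aut g).
Proof. by move=> x y; rewrite !emb_autE => /mulIg/perm_inj. Qed.

Lemma emb_aut1 g : g \in Gamma -> emb_aut g 1 = 1.
Proof. by move=> Gg; apply: (mulgI (emb_aut g 1)); rewrite -emb_autM // !mulg1. Qed.

Lemma emb_autV g x : g \in Gamma -> emb_aut g x^-1 = (emb_aut g x)^-1.
Proof.
by move=> Gg; apply: (mulgI (emb_aut g x)); rewrite -emb_autM // !mulgV emb_aut1.
Qed.

Lemma emb_autX g x n : g \in Gamma -> emb_aut g (x ^+ n) = emb_aut g x ^+ n.
Proof.
by move=> Gg; elim: n => [|n IHn]; rewrite ?emb_aut1 // !expgS emb_autM // IHn.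
Qed.

Lemma order_emb_aut g x : g \in Gamma -> #[emb_aut g x] = #[x].
Proof.
move=> Gg; apply/eqP; rewrite eqn_dvd !order_dvdn -emb_autX // expg_order emb_aut1 //.
by rewrite eqxx /= -(inj_eq (@emb_aut_inj g)) emb_autX // expg_order emb_aut1.
Qed.

Lemma emb_aut_constt g x pi : g \in Gamma -> emb_aut g x.`_pi = (emb_aut g x).`_pi.
Proof. by move=> Gg; rewrite /constt order_emb_aut // emb_autX. Qed.

Lemma emb1 : f 1 = 1.
Proof. by apply: (mulgI (f 1)); rewrite -emb_morph // !mulg1. Qed.

Lemma emb_tr1 : emb_tr 1 = 1.
Proof. by rewrite /emb_tr emb1 perm1. Qed.

Lemma emb_aut_id x : emb_aut 1 x = x.
Proof. by rewrite emb_autE emb_tr1 emb1 perm1 invg1 mulg1. Qed.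

Lemma emb_trM g h : g \in Gamma -> h \in Gamma ->
  emb_tr (g * h) = emb_aut h (emb_tr g) * emb_tr h.
Proof. by move=> Gg Gh; rewrite /emb_tr emb_morph // permM embE. Qed.

Lemma emb_aut_mul g h x : g \in Gamma -> h \in Gamma ->
  emb_aut (g * h) x = emb_aut h (emb_aut g x).
Proof.
move=> Gg Gh; apply: (mulIg (emb_tr (g * h))).
by rewrite -embE emb_morph // permM emb_trM // mulgA -emb_autM // -!embE.
Qed.

Lemma emb_aut_expg g n x : g \in Gamma -> emb_aut (g ^+ n) x = iter n (emb_aut g) x.
Proof.
move=> Gg; elim: n => [|n IHn]; first by rewrite expg0 emb_aut_id.
by rewrite expgSr emb_aut_mul ?groupX // IHn.
Qed.

Lemma emb_tr_onto y : exists2 g, g \in Gamma & emb_tr g = y.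
Proof.
have /eqP/cards1P[g def_g] := emb_regular 1 y.
by have := set11 g; rewrite -def_g inE => /andP[Gg /eqP]; exists g.
Qed.

Lemma emb_tr_inj : {in Gamma &, injective emb_tr}.
Proof.
move=> g h Gg Gh eq_tr; have /eqP/cards1P[k def_k] := emb_regular 1 (emb_tr g).
have fiber l : l \in Gamma -> emb_tr l = emb_tr g -> l = k.
  by move=> Gl tr_l; apply/set1P; rewrite -def_k inE Gl; apply/eqP.
by rewrite (fiber g Gg erefl) (fiber h Gh (esym eq_tr)).
Qed.

Section Abelian.

Hypotheses (cGamma : abelian Gamma) (cG : abelian [set: gT]).

Lemma commute_all (x y : gT) : commute x y.
Proof. exact: centsP cG x (in_setT x) y (in_setT y). Qed.

Lemma consttM_all (x y : gT) pi : (x * y).`_pi = x.`_pi * y.`_pi.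
Proof. exact: consttM (commute_all x y). Qed.

Section PrimaryComponent.

Variable q : nat.

Definition emb_trq g := (emb_tr g).`_q.

Lemma emb_aut_fix_pelt k y :
  k \in Gamma -> emb_trq k = 1 -> q.-elt y -> emb_aut k y = y.
Proof.
move=> Gk trq_k q_y; have [g Gg tr_g] := emb_tr_onto y.
have := congr1 (fun z => z.`_q) (congr1 emb_tr (centsP cGamma g Gg k Gk)).
rewrite /= !emb_trM // !consttM_all -!emb_aut_constt //.
by rewrite -/(emb_trq k) trq_k tr_g (constt_p_elt q_y) emb_aut1 // mulg1 mul1g.
Qed.

Lemma emb_trqMr g k : g \in Gamma -> k \in Gamma -> emb_trq k = 1 ->
  emb_trq (g * k) = emb_trq g.
Proof.
move=> Gg Gk trq_k; rewrite /emb_trq emb_trM // consttM_all -emb_aut_constt //.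
by rewrite -/(emb_trq k) trq_k mulg1 emb_aut_fix_pelt ?p_elt_constt.
Qed.

Lemma emb_trq_eq g h : g \in Gamma -> h \in Gamma -> emb_trq g = emb_trq h ->
  emb_trq (g^-1 * h) = 1.
Proof.
move=> Gg Gh; set k := g^-1 * h; have Gk : k \in Gamma by rewrite groupM ?groupV.
have -> : h = k * g by rewrite /k (centsP cGamma) ?groupV // mulKVg.
rewrite /emb_trq emb_trM // consttM_all -emb_aut_constt // -/(emb_trq k) => trqE.
apply: (@emb_aut_inj g); rewrite emb_aut1 //.
by apply: (mulIg (emb_tr g).`_q); rewrite -trqE mul1g.
Qed.

Definition emb_trq_ker := [set g in Gamma | emb_trq g == 1].

Lemma emb_trq_ker_group_set : group_set emb_trq_ker.
Proof.
apply/group_setP; split; first by rewrite inE group1 /emb_trq emb_tr1 constt1 eqxx.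
move=> g h /setIdP[Gg /eqP trq_g] /setIdP[Gh /eqP trq_h].
by rewrite inE groupM // emb_trqMr // trq_g eqxx.
Qed.
Canonical emb_trq_ker_group := Group emb_trq_ker_group_set.

Definition pelts := [set y : gT | q.-elt y].

Lemma pelts_group_set : group_set pelts.
Proof.
apply/group_setP; split=> [|x y]; rewrite !inE ?p_elt1 //.
exact: p_eltM (commute_all x y).
Qed.
Canonical pelts_group := Group pelts_group_set.

Lemma pgroup_pelts : q.-group pelts.
Proof.
apply/pgroupP=> r r_pr /(Cauchy r_pr)[x]; rewrite inE => q_x ox.
by rewrite -pnatE // -ox.
Qed.

Lemma card_emb_trq_ker : #|Gamma| = (#|pelts| * #|emb_trq_ker|)%N.
Proof.
rewrite -sum1_card (partition_big emb_trq (fun y => y \in pelts)); last first.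
  by move=> g _; rewrite inE p_elt_constt.
rewrite -sum_nat_const; apply: eq_bigr => y; rewrite inE => q_y.
rewrite sum1dep_card; have [g0 Gg0 tr_g0] := emb_tr_onto y.
have trq_g0 : emb_trq g0 = y by rewrite /emb_trq tr_g0 constt_p_elt.
rewrite -(card_lcoset emb_trq_ker g0); apply: eq_card => g.
rewrite mem_lcoset !inE; apply/andP/andP=> [[Gg /eqP trq_g] | [Gk /eqP trq_k]].
  by rewrite groupM ?groupV //; split=> //; apply/eqP/emb_trq_eq; rewrite // trq_g0.
have Gg : g \in Gamma by rewrite -(mulKVg g0 g) groupM.
by split=> //; rewrite -(mulKVg g0 g) emb_trqMr ?groupV // trq_g0.
Qed.

(* emb_trq induces a bijection from Gamma / emb_trq_ker onto the q-group pelts. *)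
Lemma emb_trq_p'elt d : d \in Gamma -> q^'.-elt d -> emb_trq d = 1.
Proof.
move=> Gd q'd; have sKG : emb_trq_ker \subset Gamma by apply/subsetP=> g /setIdP[].
have nKG := sub_abelian_norm cGamma sKG; have Nd := subsetP nKG d Gd.
suff /setIdP[_ /eqP] : d \in emb_trq_ker by [].
apply: coset_idr => //; apply/eqP; rewrite -order_eq1; apply/eqP; apply: (@pnat_1 q).
  apply: pnat_dvd (order_dvdG (mem_quotient _ Gd)) _.
  rewrite (card_quotient nKG) -divgS // card_emb_trq_ker mulnK ?cardG_gt0 //.
  exact: pgroup_pelts.
exact: pnat_dvd (morph_order (coset_morphism _) Nd) q'd.
Qed.

End PrimaryComponent.

Lemma emb_aut_p'elt_fix (q : nat) d y : d \in Gamma -> q^'.-elt d -> q.-elt y ->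
  emb_aut d y = y.
Proof. by move=> Gd q'd; apply: emb_aut_fix_pelt Gd (emb_trq_p'elt Gd q'd). Qed.

Section PElement.

Variables (p : nat) (g : aT).
Hypotheses (p_pr : prime p) (small_p : (logn p #|[set: gT]| < p)%N).
Hypotheses (Gg : g \in Gamma) (p_g : p.-elt g).

Let p1_gt0 : (0 < p.-1)%N. Proof. by rewrite -subn1 subn_gt0 prime_gt1. Qed.

Lemma pelt_emb_tr : p.-elt (emb_tr g).
Proof.
apply/(pnatP _ (order_gt0 _)) => r r_pr r_dvd; apply/negPn/negP => r_neq_p.
have r'g : r^'.-elt g.
  by apply: sub_p_elt p_g => z; rewrite !inE => /eqP ->; rewrite eq_sym.
have /constt1P := emb_trq_p'elt Gg r'g.
by move/(pnat_dvd r_dvd); rewrite pnatE // !inE eqxx.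
Qed.

Definition delta x := emb_aut g x * x^-1.

Lemma deltaM x y : delta (x * y) = delta x * delta y.
Proof.
rewrite /delta emb_autM // invMg -!mulgA; congr (_ * _).
by rewrite (commute_all y^-1 x^-1) !mulgA (commute_all (emb_aut g y) x^-1).
Qed.

Lemma delta1 : delta 1 = 1.
Proof. by rewrite /delta emb_aut1 // invg1 mulg1. Qed.

Lemma iter_deltaM j x y : iter j delta (x * y) = iter j delta x * iter j delta y.
Proof. by elim: j => //= j ->; rewrite deltaM. Qed.

Lemma iter_delta1 j : iter j delta 1 = 1.
Proof. by elim: j => //= j ->; rewrite delta1. Qed.

Lemma iter_deltaX j x n : iter j delta (x ^+ n) = iter j delta x ^+ n.
Proof. by elim: n => [|n IHn]; rewrite ?iter_delta1 // !expgS iter_deltaM IHn. Qed.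

Lemma emb_aut_delta x : emb_aut g (delta x) = delta (emb_aut g x).
Proof. by rewrite /delta emb_autM // emb_autV. Qed.

Lemma emb_aut_deltaE x : emb_aut g x = delta x * x.
Proof. by rewrite mulgKV. Qed.

Definition delta_image i : {set gT} :=
  iter i (fun S : {set gT} => delta @: S) (pelts p).

Lemma delta_imageS i : delta_image i.+1 = delta @: delta_image i.
Proof. by []. Qed.

Lemma delta_image_group_set i : group_set (delta_image i).
Proof.
elim: i => [|i IHi]; first exact: pelts_group_set.
pose H := Group IHi; apply/group_setP; split.
  by rewrite -delta1 imset_f ?(group1 H).
move=> _ _ /imsetP[x Hx ->] /imsetP[y Hy ->].
by rewrite -deltaM imset_f ?(groupM (G := H)).
Qed.
Canonical delta_image_group i := Group (delta_image_group_set i).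

Lemma emb_aut_delta_image i x : x \in delta_image i -> emb_aut g x \in delta_image i.
Proof.
elim: i x => [|i IHi] x; first by rewrite !inE /p_elt order_emb_aut.
by rewrite delta_imageS => /imsetP[y Hy ->]; rewrite emb_aut_delta imset_f ?IHi.
Qed.

Lemma delta_image_subS i : delta_image i.+1 \subset delta_image i.
Proof.
apply/subsetP=> _ /imsetP[y Hy ->].
by rewrite groupM ?groupV ?emb_aut_delta_image.
Qed.

Lemma delta_image_sub i j : (i <= j)%N -> delta_image j \subset delta_image i.
Proof.
move/subnK <-; elim: (j - i)%N => [|k IHk]; first by rewrite add0n.
exact: subset_trans (delta_image_subS _) IHk.
Qed.

Lemma pgroup_delta_image i : p.-group (delta_image i).
Proof. exact: pgroupS (delta_image_sub (leq0n i)) (pgroup_pelts p). Qed.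

Lemma iter_delta_image i j x :
  x \in delta_image i -> iter j delta x \in delta_image (i + j).
Proof. by move=> Hx; elim: j => [|j IHj]; rewrite ?addn0 // addnS iterS imset_f. Qed.

Definition emb_aut_perm := perm (@emb_aut_inj g).

Lemma pelt_emb_aut_perm : p.-elt emb_aut_perm.
Proof.
apply: pnat_dvd p_g; rewrite order_dvdn; apply/eqP/permP => x.
by rewrite permX perm1 (eq_iter (permE _)) -emb_aut_expg // expg_order emb_aut_id.
Qed.

Lemma acts_delta_image i : [acts <[emb_aut_perm]>, on delta_image i | 'P].
Proof.
rewrite cycle_subG !inE; apply/subsetP=> x Hx.
by rewrite inE /= apermE permE emb_aut_delta_image.
Qed.

Lemma emb_aut_fixpoint i : delta_image i != 1 ->
  exists2 x, x \in delta_image i & (x != 1) && (emb_aut g x == x).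
Proof.
move=> ntH; set F := 'Fix_(delta_image i | 'P)(<[emb_aut_perm]>).
have memF x : (x \in F) = (x \in delta_image i) && (emb_aut g x == x).
  by rewrite inE afix_cycle; congr (_ && _); apply/afix1P/eqP; rewrite /= apermE permE.
have p_dvd_F : (p %| #|F|)%N.
  have [_ p_dvd_H _] := pgroup_pdiv (pgroup_delta_image i) ntH.
  have pA : p.-group <[emb_aut_perm]>.
    by rewrite /pgroup -orderE; apply: pelt_emb_aut_perm.
  by rewrite /dvdn -(pgroup_fix_mod pA (acts_delta_image i)).
have F1 : 1 \in F by rewrite memF group1 emb_aut1 ?eqxx.
have F_gt1 : (1 < #|F|)%N.
  apply: leq_trans (prime_gt1 p_pr) (dvdn_leq _ p_dvd_F).
  by apply/card_gt0P; exists 1.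
have /card_gt0P[x /setD1P[ntx Fx]] : (0 < #|F :\ 1%g|)%N.
  by move: F_gt1; rewrite (cardsD1 (1 : gT)) F1.
by move: Fx; rewrite memF => /andP[Hx fix_x]; exists x; rewrite ?ntx.
Qed.

Lemma card_delta_image_ltn i : delta_image i != 1 ->
  (#|delta_image i.+1| < #|delta_image i|)%N.
Proof.
move=> ntH; have [x Hx /andP[ntx /eqP fix_x]] := emb_aut_fixpoint ntH.
rewrite delta_imageS ltn_neqAle leq_imset_card andbT.
apply/negP => /imset_injP delta_inj.
by case/eqP: ntx; apply: delta_inj; rewrite ?group1 // delta1 /delta fix_x mulgV.
Qed.

Lemma logn_delta_image i : (logn p #|delta_image i| <= logn p #|pelts p| - i)%N.
Proof.
elim: i => [|i IHi]; first by rewrite subn0.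
have [H1 | ntH] := eqVneq (delta_image i) 1.
  by rewrite delta_imageS H1 imset_set1 delta1 cards1 logn1.
have : (logn p #|delta_image i.+1| < logn p #|delta_image i|)%N.
  rewrite -(ltn_exp2l _ _ (prime_gt1 p_pr)) -!card_pgroup ?pgroup_delta_image //.
  exact: card_delta_image_ltn.
lia.
Qed.

Lemma delta_image_trivial : delta_image p.-1 = 1.
Proof.
apply/eqP; rewrite trivg_card1 (card_pgroup (pgroup_delta_image _)).
have le_logn : (logn p #|pelts p| <= logn p #|[set: gT]|)%N.
  by rewrite dvdn_leq_log ?cardG_gt0 ?cardSg ?subsetT.
suff -> : logn p #|delta_image p.-1| = 0%N by [].
by have := logn_delta_image p.-1; lia.
Qed.

Lemma iter_delta_pelt x : p.-elt x -> iter p.-1 delta x = 1.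
Proof.
move=> p_x; have : iter p.-1 delta x \in delta_image (0 + p.-1).
  by apply: iter_delta_image; rewrite inE.
by rewrite add0n delta_image_trivial => /set1P.
Qed.

Lemma emb_tr_expg_delta m k : iter m.+1 delta (emb_tr g) = 1 ->
  emb_tr (g ^+ k) = \prod_(j < m.+1) iter j delta (emb_tr g) ^+ 'C(k, j.+1).
Proof.
set c := emb_tr g => delta_c; elim: k => [|k IHk].
  by rewrite expg0 emb_tr1 big1 // => j _; rewrite bin0n expg0.
rewrite expgSr emb_trM ?groupX // IHk -/c.
rewrite (big_morph _ (fun x y => emb_autM x y Gg) (emb_aut1 Gg)).
under eq_bigr => j _ do rewrite emb_autX // emb_aut_deltaE (expgMn _ (commute_all _ _)).
rewrite prodgM_commute; last by move=> *; apply: commute_all.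
under [RHS]eq_bigr => j _ do rewrite binS expgD.
rewrite [RHS]prodgM_commute; last by move=> *; apply: commute_all.
set P := \prod_(j < m.+1) iter j delta c ^+ 'C(k, j.+1).
suff shift : \prod_(j < m.+1) delta (iter j delta c) ^+ 'C(k, j.+1) * c =
             \prod_(j < m.+1) iter j delta c ^+ 'C(k, j).
  by rewrite -mulgA (commute_all P c) mulgA shift commute_all.
rewrite big_ord_recr big_ord_recl /= [delta _]delta_c expg1n mulg1 bin0 expg1.
exact: commute_all.
Qed.

Lemma emb_tr_expg k :
  emb_tr (g ^+ k) = \prod_(j < p.-1) iter j delta (emb_tr g) ^+ 'C(k, j.+1).
Proof.
rewrite -(prednK p1_gt0); apply: emb_tr_expg_delta.
by rewrite prednK ?iter_delta_pelt ?pelt_emb_tr.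
Qed.

Lemma emb_tr_expg_prime_pow e : emb_tr g ^+ (p ^ e) = 1 -> emb_tr (g ^+ (p ^ e)) = 1.
Proof.
move=> ce; rewrite emb_tr_expg big1 // => j _.
have /dvdnP[r ->] : (p ^ e %| 'C(p ^ e, j.+1))%N.
  by apply: dvdn_prime_pow_bin; rewrite //= -ltn_predRL.
by rewrite mulnC expgM -iter_deltaX ce iter_delta1 expg1n.
Qed.

Lemma delta_relation_trivial w n m (a : 'I_m -> nat) : p.-elt w -> coprime p n ->
  w ^+ n * \prod_(j < m) iter j.+1 delta w ^+ a j = 1 -> w = 1.
Proof.
move=> p_w co_pn rel_w.
suff w_in i : w \in delta_image i.
  by have := w_in p.-1; rewrite delta_image_trivial => /set1P.
elim: i => [|i IHi]; first by rewrite inE.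
have Q_in : \prod_(j < m) iter j.+1 delta w ^+ a j \in delta_image i.+1.
  apply: group_prod => j _; rewrite groupX //.
  apply: subsetP (delta_image_sub (leq_addr j i.+1)) _ _.
  by rewrite addSnnS; apply: iter_delta_image.
have wn_in : w ^+ n \in delta_image i.+1.
  by rewrite (canRL (mulgK _) rel_w) mul1g groupV.
have co_wn : coprime #[w] n by have [k ->] := p_natP p_w; apply: coprimeXl.
have /eqP gen_w : generator <[w]> (w ^+ n) by rewrite generator_coprime.
by apply: (subsetP _ w (cycle_id w)); rewrite gen_w cycle_subG.
Qed.

Lemma emb_tr_expg_prime_pow_fact e :
  emb_tr (g ^+ (p ^ e)) ^+ (p.-1)`!
    = \prod_(j < p.-1)
        iter j delta (emb_tr g ^+ (p ^ e)) ^+ ((p.-1)`! %/ j.+1 * 'C((p ^ e).-1, j)).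
Proof.
set L := (p.-1)`!; have expL_morph := fun x y => expgMn L (commute_all x y).
rewrite emb_tr_expg (big_morph (fun x => x ^+ L) expL_morph (expg1n _ L)).
apply: eq_bigr => j _; rewrite -expgM iter_deltaX -expgM; congr (_ ^+ _).
have j_dvd_L : (j.+1 %| L)%N by rewrite dvdn_fact //= ltn_ord.
by rewrite mulnCA mul_bin_diag mulnA divnK // mulnC.
Qed.

Lemma emb_tr_expg_prime_pow_inv e :
  emb_tr (g ^+ (p ^ e)) = 1 -> emb_tr g ^+ (p ^ e) = 1.
Proof.
move=> tr1; have := emb_tr_expg_prime_pow_fact e.
rewrite tr1 expg1n -(prednK p1_gt0) big_ord_recl /= divn1 bin0 muln1 => /esym.
apply: delta_relation_trivial; first by apply: p_eltX; apply: pelt_emb_tr.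
by rewrite prednK //; apply: coprime_fact_pred.
Qed.

Lemma order_emb_tr : #[emb_tr g] = #[g].
Proof.
have eq1 e : (g ^+ (p ^ e) == 1) = (emb_tr g ^+ (p ^ e) == 1).
  apply/eqP/eqP => [g_e | c_e].
    by apply: emb_tr_expg_prime_pow_inv; rewrite g_e emb_tr1.
  by apply: emb_tr_inj; rewrite ?groupX // emb_tr1 emb_tr_expg_prime_pow.
have [a ord_g] := p_natP p_g; have [b ord_c] := p_natP pelt_emb_tr.
apply/eqP; rewrite eqn_dvd !order_dvdn.
by rewrite ord_g -eq1 -ord_g expg_order eqxx ord_c (eq1 b) -ord_c expg_order eqxx.
Qed.

End PElement.

Lemma emb_tr_constt (p : nat) g : g \in Gamma -> (emb_tr g).`_p = emb_tr g.`_p.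
Proof.
move=> Gg; have Gp : g.`_p \in Gamma by rewrite groupX.
have Gp' : g.`_p^' \in Gamma by rewrite groupX.
have p_tr := pelt_emb_tr Gp (p_elt_constt p g).
rewrite -{1}(consttC p g) emb_trM // consttM_all -emb_aut_constt // (constt_p_elt p_tr).
have tr_p'_part : (emb_tr g.`_p^').`_p = 1 := emb_trq_p'elt Gp' (p_elt_constt _ _).
by rewrite (emb_aut_p'elt_fix Gp' (p_elt_constt _ _) p_tr) tr_p'_part mulg1.
Qed.

Lemma order_emb_tr_all : (forall p, prime p -> logn p #|[set: gT]| < p)%N ->
  {in Gamma, forall g, #[emb_tr g] = #[g]}.
Proof.
move=> small g Gg; apply: eqn_from_log => // p.
have [p_pr | p_npr] := boolP (prime p).
  rewrite -(logn_part p #[emb_tr g]) -(logn_part p #[g]) -!order_constt.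
  by rewrite emb_tr_constt // (order_emb_tr p_pr (small p p_pr)) ?groupX ?p_elt_constt.
by rewrite (lognE p #[g]) lognE (negPf p_npr).
Qed.

End Abelian.
End RegularEmbedding.

Theorem theorem3 (aT : finGroupType) (Gamma : {group aT}) :
  abelian Gamma ->
  (forall p : nat, prime p -> (p %| #|Gamma|)%N ->
     (logn p #|Gamma| < p.-1)%N || ((p <= 3)%N && (logn p #|Gamma| < p)%N)) ->
  forall gT : finGroupType,
    abelian [set: gT] -> #|[set: gT]| = #|Gamma| ->
    (0 < e_HGS gT Gamma)%N ->
    [set: gT] \isog Gamma.
Proof.
move=> cGamma small_Gamma gT cG card_G /card_gt0P[X /imsetP[f]].
rewrite inE => f_reg _.
have small_G p : prime p -> (logn p #|[set: gT]| < p)%N.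
  move=> p_pr; rewrite card_G; have [p_dvd | p_ndvd] := boolP (p %| #|Gamma|)%N.
    case/orP: (small_Gamma p p_pr p_dvd) => [lt_v_p1 | /andP[_ //]].
    exact: leq_trans lt_v_p1 (leq_pred p).
  by rewrite logn_coprime ?prime_gt0 // prime_coprime.
rewrite isog_sym; apply: (isog_abelian_order_bij (t := emb_tr f)) => //.
- exact: emb_tr_inj.
- apply/setP => y; rewrite inE.
  by have [g Gg <-] := emb_tr_onto f_reg y; apply: imset_f.
- exact: order_emb_tr_all.
Qed.
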